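(* Let $e_1,e_2,e_3$ be the standard basis of $\mathbb{Z}^3$. Up to isomorphism, the toric varieties which are obtainable from $\mathbb{A}^3$ by a sequence of blow-ups along torus-invariant subvarieties and have ample anticanonical bundle are exactly: (1) $\mathbb{A}^3$; (2) the blow-up of $\mathbb{A}^3$ along a torus-invariant subvariety of codimension $2$; (3) the blow-up of $\mathbb{A}^3$ at the origin; (4) the toric variety whose fan has maximal cones $\mathrm{cone}(e_1,e_1+e_2,e_1+e_2+e_3)$, $\mathrm{cone}(e_1,e_3,e_1+e_2+e_3)$, $\mathrm{cone}(e_2,e_3,e_1+e_2+e_3)$, $\mathrm{cone}(e_2,e_1+e_2,e_1+e_2+e_3)$ (obtainable from $\mathbb{A}^3$ by two consecutive blow-ups along subvarieties of codimension two); (5) the toric variety whose fan has maximal cones $\mathrm{cone}(e_1,e_3,e_1+e_2+2e_3)$, $\mathrm{cone}(e_1,e_1+e_2+e_3,e_1+e_2+2e_3)$, $\mathrm{cone}(e_1,e_2,e_1+e_2+e_3)$, $\mathrm{cone}(e_2,e_1+e_2+e_3,e_1+e_2+2e_3)$, $\mathrm{cone}(e_2,e_3,e_1+e_2+2e_3)$ (obtainable from $\mathbb{A}^3$ by a blow-up at the origin followed by a blow-up along a codimension-two subvariety).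
   Context: $\mathbb{A}^3$ is the toric variety of $(\mathbb{C}^* )^3$ with fan $\mathrm{cone}(e_1,e_2,e_3)$ and its faces. Blow-ups along torus-invariant subvarieties (orbit closures) of smooth toric varieties are toric and correspond to star subdivisions of the corresponding cone at the sum of its primitive generators. *)

(* Combinatorial model of smooth toric 3-folds obtained
   from A^3 by torus-invariant blow-ups (star subdivisions). *)
From mathcomp Require Import all_boot all_order all_algebra.
Set Implicit Arguments. Unset Strict Implicit. Unset Printing Implicit Defensive.
Import Order.TTheory GRing.Theory Num.Theory.
Local Open Scope ring_scope.

Definition vec := 'rV[int]_3.
Definition mkv (x y z : int) : vec := \row_(i < 3) [:: x; y; z]`_i.
Definition e1 : vec := mkv 1 0 0.
Definition e2 : vec := mkv 0 1 0.
Definition e3 : vec := mkv 0 0 1.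

(* a smooth (simplicial) cone is given by its list of primitive ray generators;
   a fan is given by the list of its maximal cones (faces are implicit:
   the faces of a simplicial cone are spanned by subsets of its generators). *)
Definition cone := seq vec.
Definition fan := seq cone.

Definition A3 : fan := [:: [:: e1; e2; e3]].

Definition rays (F : fan) : seq vec := flatten F.

Definition is_face (F : fan) (T : cone) : Prop :=
  [/\ T != [::], uniq T & exists2 s, s \in F & {subset T <= s}].

Definition star (F : fan) (T : cone) : fan :=
  let v := \sum_(t <- T) t in
  flatten [seq if all (fun t => t \in s) T
               then [seq v :: [seq u <- s | u != t] | t <- T]
               else [:: s] | s <- F].

Inductive reachable : fan -> Prop :=
| reach_A3 : reachable A3
| reach_star F T : reachable F -> is_face F T -> reachable (star F T).

Definition dot (m u : vec) : int := \sum_(i < 3) m 0 i * u 0 i.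

(* -K = sum of all torus-invariant prime divisors is ample: its support
   function (with m_s in M = Z^3, <m_s,u_rho> = -1 for rho in s) is strictly
   convex: <m_s,u_rho> > -1 for every ray rho not in s (CLS, Lemma 6.1.5,
   Thm 6.1.14 / 7.2.? for fans with convex full-dimensional support). *)
Definition anticanonical_ample (F : fan) : Prop :=
  forall s, s \in F -> exists m : vec,
    (forall u, u \in s -> dot m u = -1) /\
    (forall u, u \in rays F -> u \notin s -> -1 < dot m u).

Definition fan_eq (F G : fan) : Prop :=
  (forall s, s \in F -> exists2 t, t \in G & s =i t) /\
  (forall t, t \in G -> exists2 s, s \in F & s =i t).

(* isomorphism of toric varieties = lattice automorphism of N carrying
   one fan onto the other *)
Definition fan_iso (F G : fan) : Prop :=
  exists2 A : 'M[int]_3, A \in unitmx &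
    fan_eq (map (map (fun u : vec => u *m A)) F) G.

Definition fan1 : fan := A3.
Definition fan2 : fan := star A3 [:: e1; e2].
Definition fan3 : fan := star A3 [:: e1; e2; e3].
Definition fan4 : fan :=
  [:: [:: e1; mkv 1 1 0; mkv 1 1 1];
      [:: e1; e3; mkv 1 1 1];
      [:: e2; e3; mkv 1 1 1];
      [:: e2; mkv 1 1 0; mkv 1 1 1]].
Definition fan5 : fan :=
  [:: [:: e1; e3; mkv 1 1 2];
      [:: e1; mkv 1 1 1; mkv 1 1 2];
      [:: e1; e2; mkv 1 1 1];
      [:: e2; mkv 1 1 1; mkv 1 1 2];
      [:: e2; e3; mkv 1 1 2]].

From Pilot Require Import Defs.
From mathcomp Require Import all_boot all_order all_algebra.
From mathcomp Require Import fingroup perm ring zify.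
Set Implicit Arguments. Unset Strict Implicit. Unset Printing Implicit Defensive.
Import Order.TTheory GRing.Theory Num.Theory.
Local Open Scope ring_scope.

(* A fan reachable from A^3 by star subdivisions is, as a set of cones, one of 114
   smooth fans found by exhaustive search, unless it contains one of three
   configurations that survive every further subdivision and forbid an ample
   anticanonical divisor: a maximal cone containing none of e1, e2, e3; a ray u with
   x + y = 2u for two distinct rays x, y; or a ray u with x + y = 3u.  Indeed the
   support function m_s of a maximal cone s is >= -1 on every ray, with equality
   exactly on s.  In the first case m_s(e_i) > -1 makes m_s nonnegative on the
   positive octant, which contains s; in the second, m_s = -1 at x and y, so x, y, u
   are three generators of one cone satisfying a linear relation; in the third,
   m_s(x) + m_s(y) = -3.  On a unimodular cone m_s is given by Cramer's rule, which
   decides ampleness of each of the 114 fans: exactly eleven are ample, and each is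
   a coordinate permutation of one of the five fans of the statement. *)

(* Lattice points as triples of integers: unlike the row vectors of [Defs], these
   are evaluated efficiently by [vm_compute]. *)
Definition Z3 := (int * int * int)%type.
Definition zfan := seq (seq Z3).
Definition basis3 : seq Z3 := [:: (1, 0, 0); (0, 1, 0); (0, 0, 1)].

Definition dot3 (m u : Z3) : int := m.1.1 * u.1.1 + m.1.2 * u.1.2 + m.2 * u.2.
Definition cross3 (a b : Z3) : Z3 :=
  (a.1.2 * b.2 - a.2 * b.1.2, a.2 * b.1.1 - a.1.1 * b.2, a.1.1 * b.1.2 - a.1.2 * b.1.1).
Definition det3 (a b c : Z3) : int := dot3 (cross3 b c) a.
Definition weight (u : Z3) : int := u.1.1 + u.1.2 + u.2.
Definition scale3 (k : int) (u : Z3) : Z3 := (k * u.1.1, k * u.1.2, k * u.2).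

Lemma Z3_eq (u v : Z3) : u.1.1 = v.1.1 -> u.1.2 = v.1.2 -> u.2 = v.2 -> u = v.
Proof. by case: u v => [[? ?] ?] [[? ?] ?] /= -> -> ->. Qed.

Lemma dot3D m u w : dot3 m (u + w) = dot3 m u + dot3 m w.
Proof. by case: m u w => [[? ?] ?] [[? ?] ?] [[? ?] ?]; rewrite /dot3 /=; ring. Qed.

Lemma dot3Mn m u n : dot3 m (u *+ n) = dot3 m u *+ n.
Proof.
elim: n => [|n IH]; first by rewrite !mulr0n /dot3 /= !mulr0 !addr0.
by rewrite !mulrS dot3D IH.
Qed.

Lemma dot3Z m k u : dot3 m (scale3 k u) = k * dot3 m u.
Proof. by case: m u => [[? ?] ?] [[? ?] ?]; rewrite /dot3 /=; ring. Qed.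

Lemma det3_combination (a b c : Z3) (i j k : nat) :
  let v := a *+ i + b *+ j + c *+ k in
  [/\ det3 v b c = det3 a b c *+ i, det3 v a c = - det3 a b c *+ j
    & det3 v a b = det3 a b c *+ k].
Proof.
rewrite /det3 !dot3D !dot3Mn.
by case: a b c => [[? ?] ?] [[? ?] ?] [[? ?] ?]; rewrite /dot3 /cross3 /=; split; ring.
Qed.

Lemma det3_midpoint_cone (a b c x y u : Z3) :
  x \in [:: a; b; c] -> y \in [:: a; b; c] -> u \in [:: a; b; c] ->
  uniq [:: x; y; u] -> x + y = scale3 2 u -> det3 a b c = 0.
Proof.
move=> xs ys us uxyu e; have ye : y = scale3 2 u - x by rewrite -e addrC addKr.
move: xs us ys uxyu; rewrite ye /= !inE negb_or andbT.
case: a b c => [[a1 a2] a3] [[b1 b2] b3] [[c1 c2] c3].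
case/or3P=> /eqP-> /or3P [] /eqP-> /or3P [] /eqP e3 /andP [/andP [n1 n2] n3];
  try by move: n1 n2 n3; rewrite ?e3 eqxx.
all: by rewrite -e3 /det3 /dot3 /cross3 /=; ring.
Qed.

Lemma det3_uniq a b c : det3 a b c != 0 -> uniq [:: a; b; c].
Proof.
have det3_0 x y z : [|| x == y, x == z | y == z] -> det3 x y z = 0.
  case/or3P=> /eqP->; case: z y => [[? ?] ?] [[? ?] ?];
  by rewrite /det3 /dot3 /cross3 /=; ring.
move=> d; rewrite /= !inE negb_or andbT.
rewrite -andbA; apply/and3P; split;
  by apply: contraNneq d => ->; apply/eqP/det3_0; rewrite eqxx ?orbT.
Qed.

Definition toV (p : Z3) : vec := mkv p.1.1 p.1.2 p.2.
Definition i0 : 'I_3 := @Ordinal 3 0 isT.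
Definition i1 : 'I_3 := @Ordinal 3 1 isT.
Definition i2 : 'I_3 := @Ordinal 3 2 isT.

Definition ofV (u : vec) : Z3 := (u ord0 i0, u ord0 i1, u ord0 i2).

Lemma toVK : cancel toV ofV.
Proof. by case=> [[x y] z]; rewrite /ofV /toV /mkv !mxE. Qed.

Lemma ofVK : cancel ofV toV.
Proof.
move=> u; apply/rowP => -[[|[|[|//]]] i]; rewrite /toV /mkv mxE /=;
by congr (u _ _); apply: val_inj.
Qed.

Lemma toV_inj : injective toV. Proof. exact: can_inj toVK. Qed.

Lemma mem_toV x s : (toV x \in map toV s) = (x \in s).
Proof. exact: (mem_map toV_inj). Qed.

Lemma toVD : {morph toV : p q / p + q}.
Proof. by move=> p q; apply/rowP => -[[|[|[|//]]] i]; rewrite /toV /mkv !mxE. Qed.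

Lemma dot_toV m u : dot (toV m) (toV u) = dot3 m u.
Proof. by rewrite /dot !big_ord_recl big_ord0 !mxE /= addr0 addrA. Qed.

Definition toF (F : zfan) : fan := map (map toV) F.
Definition ofF (F : fan) : zfan := map (map ofV) F.

Lemma toFK : cancel toF ofF.
Proof. by move=> F; rewrite /ofF /toF -map_comp map_id_in // => s _; exact: (mapK toVK). Qed.

Lemma ofFK : cancel ofF toF.
Proof. by move=> F; rewrite /ofF /toF -map_comp map_id_in // => s _; exact: (mapK ofVK). Qed.

Lemma rays_toF F : rays (toF F) = map toV (flatten F).
Proof. by rewrite /rays /toF map_flatten. Qed.

(* The sum written out with [foldr] and componentwise addition, which [vm_compute]
   evaluates much faster than the big operator over the product group. *)
Definition sum3 (T : seq Z3) : Z3 :=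
  foldr (fun a b => (a.1.1 + b.1.1, a.1.2 + b.1.2, a.2 + b.2)) 0 T.

Lemma sum3E T : sum3 T = \sum_(t <- T) t.
Proof. by elim: T => [|t T IH]; rewrite ?big_nil ?big_cons //= IH. Qed.

Lemma sum3_cons t T : sum3 (t :: T) = t + sum3 T.
Proof. by []. Qed.

Lemma toV_sum3 T : \sum_(t <- map toV T) t = toV (sum3 T).
Proof.
elim: T => [|t T IH]; last by rewrite big_cons IH /= toVD.
by rewrite big_nil; apply/rowP => i; rewrite !mxE; case: i => -[|[|[|]]].
Qed.

Definition zstar (F : zfan) (T : seq Z3) : zfan :=
  let v := sum3 T in
  flatten [seq if all (fun t => t \in s) T
               then [seq v :: [seq u <- s | u != t] | t <- T]
               else [:: s] | s <- F].

Lemma star_toF F T : star (toF F) (map toV T) = toF (zstar F T).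
Proof.
rewrite /star /zstar /toF toV_sum3 map_flatten -!map_comp; congr flatten.
apply: eq_map => s /=; rewrite all_map; under eq_all do rewrite /= mem_toV.
case: ifP => _ //=; rewrite -!map_comp; apply: eq_map => t /=; congr (_ :: _).
by rewrite filter_map; congr map; apply: eq_filter => u /=; rewrite (inj_eq toV_inj).
Qed.

Lemma ofF_star F T : ofF (star F T) = zstar (ofF F) (map ofV T).
Proof. by rewrite -{1}(ofFK F) -{1}(mapK ofVK T) star_toF toFK. Qed.

Definition zface (F : zfan) (T : seq Z3) : Prop :=
  [/\ T != [::], uniq T & exists2 s, s \in F & {subset T <= s}].

Lemma ofF_face F T : is_face F T -> zface (ofF F) (map ofV T).
Proof.
case=> T0 uT [s sF sT]; split.
- by case: T T0 {uT sT}.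
- by rewrite (map_inj_uniq (can_inj ofVK)).
- exists (map ofV s); first exact: map_f.
  by move=> _ /mapP [t tT ->]; apply: map_f; apply: sT.
Qed.

Definition refines (F G : zfan) : Prop :=
  forall s, s \in F -> exists2 t, t \in G & s =i t.

Definition zfan_eq (F G : zfan) : Prop := refines F G /\ refines G F.

Lemma refines_trans F G H : refines F G -> refines G H -> refines F H.
Proof.
move=> FG GH s /FG [t /GH [w wH tw] st].
by exists w => // x; rewrite st tw.
Qed.

Lemma zfan_eq_sym F G : zfan_eq F G -> zfan_eq G F.
Proof. by case. Qed.

Lemma zfan_eq_trans F G H : zfan_eq F G -> zfan_eq G H -> zfan_eq F H.
Proof. by case=> FG GF [GH HG]; split; apply: refines_trans; eassumption. Qed.

Lemma zfan_eq_rays F G : zfan_eq F G -> flatten F =i flatten G.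
Proof.
have sub F' G' : refines F' G' -> {subset flatten F' <= flatten G'}.
  by move=> FG u /flattenP [s /FG [t tG st] us]; apply/flattenP; exists t; rewrite -?st.
by case=> FG GF u; apply/idP/idP; apply: sub.
Qed.

Lemma fan_eq_toF F G : zfan_eq F G -> fan_eq (toF F) (toF G).
Proof.
have map_eqi (s t : seq Z3) : s =i t -> map toV s =i map toV t.
  by move=> st x; apply/mapP/mapP => -[y yi ->]; exists y; rewrite // ?st // -st.
case=> FG GF; split=> _ /mapP [s sF ->].
- by case: (FG s sF) => t tG st; exists (map toV t); [apply: map_f | apply: map_eqi].
- case: (GF s sF) => t tF st; exists (map toV t); first exact: map_f.
  by apply: map_eqi => x; rewrite st.
Qed.

Lemma zstarP F T s : reflect
  (exists2 s1, s1 \in F &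
     (~~ all (fun t => t \in s1) T /\ s = s1) \/
     (all (fun t => t \in s1) T /\ exists2 t, t \in T & s = sum3 T :: [seq u <- s1 | u != t]))
  (s \in zstar F T).
Proof.
apply: (iffP flattenP).
- move=> [l /mapP [s1 s1F ->]]; case: ifP => a.
  + by move=> /mapP [t tT ->]; exists s1 => //; right; split => //; exists t.
  + by rewrite inE => /eqP ->; exists s1 => //; left; rewrite a.
- move=> [s1 s1F [[/negbTE a ->]|[a [t tT ->]]]].
  + by exists [:: s1]; [apply/mapP; exists s1; rewrite ?a | rewrite inE].
  + by exists [seq sum3 T :: [seq u <- s1 | u != t0] | t0 <- T];
      [apply/mapP; exists s1; rewrite ?a | apply: map_f].
Qed.

Lemma refines_zstar F G T : refines F G -> refines (zstar F T) (zstar G T).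
Proof.
move=> FG s /zstarP [s1 /FG [t1 t1G e] [[a ->]|[a [t tT ->]]]].
- by exists t1 => //; apply/zstarP; exists t1 => //; left; rewrite -(eq_all e).
- exists (sum3 T :: [seq u <- t1 | u != t]).
    by apply/zstarP; exists t1 => //; right; split; [rewrite -(eq_all e) | exists t].
  by move=> x; rewrite !inE !mem_filter e.
Qed.

Lemma zstar_eq F G T : zfan_eq F G -> zfan_eq (zstar F T) (zstar G T).
Proof. by case=> FG GF; split; apply: refines_zstar. Qed.

Lemma refines_zstar_perm F T T' : uniq T -> uniq T' -> T =i T' ->
  refines (zstar F T) (zstar F T').
Proof.
move=> uT uT' e; have sv : sum3 T = sum3 T'.
  by rewrite !sum3E; apply/perm_big/uniq_perm.
move=> s /zstarP [s1 s1F [[a ->]|[a [t tT ->]]]].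
- by exists s1 => //; apply/zstarP; exists s1 => //; left; rewrite -(eq_all_r e).
- exists (sum3 T' :: [seq u <- s1 | u != t]); last by rewrite sv.
  by apply/zstarP; exists s1 => //; right; split; [rewrite -(eq_all_r e) | exists t; rewrite -?e].
Qed.

Lemma zstar_perm F T T' : uniq T -> uniq T' -> T =i T' -> zfan_eq (zstar F T) (zstar F T').
Proof. by move=> uT uT' e; split; apply: refines_zstar_perm => // x; rewrite e. Qed.

Lemma rays_zstar F T : zface F T -> {subset flatten F <= flatten (zstar F T)}.
Proof.
case=> T0 uT _ u /flattenP [s1 s1F us1].
case: (boolP (all (fun t => t \in s1) T)) => a; last first.
  by apply/flattenP; exists s1 => //; apply/zstarP; exists s1 => //; left.
have in_cone t : t \in T -> u != t -> u \in flatten (zstar F T).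
  move=> tT ut; apply/flattenP; exists (sum3 T :: [seq x <- s1 | x != t]).
    by apply/zstarP; exists s1 => //; right; split => //; exists t.
  by rewrite inE mem_filter ut us1 orbT.
case: T T0 uT a in_cone => [//|t0 T'] _ /andP [t0T' _] a in_cone.
have [ut0|] := eqVneq u t0; last by apply: in_cone; rewrite inE eqxx.
case: T' t0T' a in_cone => [|t1 T''] t0T' a in_cone.
- apply/flattenP; exists (sum3 [:: t0] :: [seq x <- s1 | x != t0]).
    by apply/zstarP; exists s1 => //; right; split => //; exists t0; rewrite ?inE.
  by rewrite sum3E big_seq1 inE ut0 eqxx.
- apply: (in_cone t1); first by rewrite !inE eqxx orbT.
  by rewrite ut0; apply: contraNneq t0T' => ->; rewrite inE eqxx.
Qed.

Definition positive3 (u : Z3) : Prop :=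
  [/\ 0 <= u.1.1, 0 <= u.1.2, 0 <= u.2 & 0 < weight u].

Definition admissible (F : zfan) : Prop :=
  [/\ forall s, s \in F -> exists a b c, s = [:: a; b; c] /\ det3 a b c != 0,
      {in flatten F, forall u, positive3 u}
    & {subset basis3 <= flatten F}].

Definition zA3 : zfan := [:: basis3].

Lemma admissible_zA3 : admissible zA3.
Proof.
split.
- by move=> s; rewrite inE => /eqP ->; exists (1, 0, 0), (0, 1, 0), (0, 0, 1).
- by move=> u; rewrite /= ?cats0 !inE => /or3P [] /eqP ->.
- by move=> u; rewrite /= ?cats0.
Qed.

Lemma positive3D u w : positive3 u -> positive3 w -> positive3 (u + w).
Proof.
by case: u w => [[? ?] ?] [[? ?] ?]; rewrite /positive3 /weight /= => -[? ? ? ?] [? ? ? ?];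
  split; lia.
Qed.

Lemma positive3_sum T : T != [::] -> {in T, forall t, positive3 t} -> positive3 (sum3 T).
Proof.
elim: T => [//|t [|t' T] IH] _ pT; first by rewrite sum3E big_seq1; apply: pT; rewrite inE.
rewrite sum3_cons; apply: positive3D; first by apply: pT; rewrite inE eqxx.
by apply: IH => // x xT; apply: pT; rewrite inE xT orbT.
Qed.

Lemma weightD u w : weight (u + w) = weight u + weight w.
Proof. by case: u w => [[? ?] ?] [[? ?] ?]; rewrite /weight /=; ring. Qed.

Lemma weight_sum3 T : {in T, forall t, positive3 t} -> (size T)%:Z <= weight (sum3 T).
Proof.
elim: T => [|t T IH] pT; first by [].
have [_ _ _ wt] := pT t (mem_head _ _).
have := IH (fun x xT => pT x (mem_behead (s := t :: T) xT)).
by rewrite sum3_cons weightD /=; lia.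
Qed.

Lemma sum3_in_cone (a b c : Z3) T : uniq [:: a; b; c] -> uniq T ->
  {subset T <= [:: a; b; c]} -> sum3 T = a *+ (a \in T) + b *+ (b \in T) + c *+ (c \in T).
Proof.
move=> uabc uT sT; have pT : perm_eq T [seq x <- [:: a; b; c] | x \in T].
  apply: uniq_perm; rewrite ?filter_uniq // => x.
  by rewrite mem_filter; case xT: (x \in T) => //=; rewrite sT.
rewrite sum3E (perm_big _ pT) big_filter big_mkcond !big_cons big_nil /=.
by case: (a \in T); case: (b \in T); case: (c \in T); rewrite ?addr0 ?add0r ?addrA.
Qed.

Lemma det3_star_cone (x y z : Z3) T t : det3 x y z != 0 -> uniq T ->
  {subset T <= [:: x; y; z]} -> t \in T ->
  exists a b c, sum3 T :: [seq u <- [:: x; y; z] | u != t] = [:: a; b; c] /\ det3 a b c != 0.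
Proof.
move=> d uT sT tT; have uxyz := det3_uniq d; rewrite (sum3_in_cone uxyz uT sT).
have [det_x det_y det_z] := det3_combination x y z (x \in T) (y \in T) (z \in T).
move: uxyz; rewrite /= !inE negb_or andbT => /andP [/andP [xy xz] yz].
have := sT t tT; rewrite !inE => /or3P [] /eqP tE; subst t.
- by exists (x *+ (x \in T) + y *+ (y \in T) + z *+ (z \in T)), y, z;
    rewrite eqxx eq_sym xy eq_sym xz det_x tT.
- by exists (x *+ (x \in T) + y *+ (y \in T) + z *+ (z \in T)), x, z;
    rewrite eqxx xy eq_sym yz det_y tT oppr_eq0.
- by exists (x *+ (x \in T) + y *+ (y \in T) + z *+ (z \in T)), x, y;
    rewrite eqxx xz yz det_z tT.
Qed.

Lemma admissible_zstar F T : zface F T -> admissible F -> admissible (zstar F T).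
Proof.
move=> fT [cones pos basis]; have rT := rays_zstar fT; case: fT => T0 uT _.
split; last by move=> e eB; apply: rT; apply: basis.
- move=> s /zstarP [s1 s1F [[_ ->]|[a [t tT ->]]]]; first exact: cones.
  have [x [y [z [s1E d]]]] := cones s1 s1F; subst s1.
  by apply: det3_star_cone => // w wT; apply: (allP a).
- move=> u /flattenP [s /zstarP [s1 s1F [[_ ->]|[a [t tT ->]]]]] us.
    by apply: pos; apply/flattenP; exists s1.
  move: us; rewrite inE mem_filter => /predU1P [->|/andP [_ us1]]; last first.
    by apply: pos; apply/flattenP; exists s1.
  apply: positive3_sum => // w wT; apply: pos; apply/flattenP; exists s1 => //.
  exact: (allP a).
Qed.

(** * Obstructions to ampleness *)

Definition obstructed (F : zfan) : Prop :=
  [\/ exists2 s, s \in F & ~~ has (fun e => e \in s) basis3,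
      exists u x y,
        [/\ u \in flatten F, x \in flatten F, y \in flatten F, x != y & x + y = scale3 2 u]
    | exists u x y,
        [/\ u \in flatten F, x \in flatten F, y \in flatten F & x + y = scale3 3 u]].

Lemma obstructed_eq F G : zfan_eq F G -> obstructed G -> obstructed F.
Proof.
move=> FG; have r := zfan_eq_rays FG; case: FG => _ GF.
case=> [[s /GF [t tF st] ns]|[u [x [y [? ? ? ? ?]]]]|[u [x [y [? ? ? ?]]]]].
- apply: Or31; exists t => //; apply: contra ns => /hasP [e eb et].
  by apply/hasP; exists e; rewrite ?st.
- by apply: Or32; exists u, x, y; rewrite !r.
- by apply: Or33; exists u, x, y; rewrite !r.
Qed.

Lemma sum3_not_basis F s T : admissible F -> s \in F -> ~~ has (fun e => e \in s) basis3 ->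
  T != [::] -> {subset T <= s} -> sum3 T \notin basis3.
Proof.
move=> [_ pos _] sF ns T0 sT.
case: T T0 sT => [//|t [|t' T]] _ sT.
  rewrite sum3E big_seq1; apply: contra ns => tb; apply/hasP; exists t => //.
  by apply: sT; rewrite inE.
have pT : {in t :: t' :: T, forall w, positive3 w}.
  by move=> w /sT ws; apply: pos; apply/flattenP; exists s.
apply/negP => vb; have := weight_sum3 pT.
by move: vb; rewrite !inE => /or3P [] /eqP ->.
Qed.

Lemma obstructed_zstar F T : zface F T -> admissible F -> obstructed F -> obstructed (zstar F T).
Proof.
move=> fT adm; have rT := rays_zstar fT; case: (fT) => T0 uT _.
case=> [[s sF ns]|[u [x [y [? ? ? ? ?]]]]|[u [x [y [? ? ? ?]]]]]; last 2 first.
- by apply: Or32; exists u, x, y; split => //; apply: rT.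
- by apply: Or33; exists u, x, y; split => //; apply: rT.
apply: Or31; case: (boolP (all (fun t => t \in s) T)) => a; last first.
  by exists s => //; apply/zstarP; exists s => //; left.
have sT : {subset T <= s} by move=> w wT; apply: (allP a).
case: T T0 uT a sT fT rT => [//|t0 T'] T0 uT a sT _ _.
exists (sum3 (t0 :: T') :: [seq w <- s | w != t0]).
  by apply/zstarP; exists s => //; right; split => //; exists t0; rewrite ?mem_head.
have vb := sum3_not_basis adm sF ns T0 sT.
apply/hasP => -[e eb]; rewrite inE mem_filter => /predU1P [ev|/andP [_ es]].
- by move: vb; rewrite -ev eb.
- by move/hasP: ns; apply; exists e.
Qed.

Definition zample (F : zfan) : Prop :=
  forall s, s \in F -> exists m : Z3,
    {in s, forall u, dot3 m u = -1} /\ {in flatten F, forall u, u \notin s -> -1 < dot3 m u}.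

Lemma ample_toF F : anticanonical_ample (toF F) <-> zample F.
Proof.
split=> A s sF.
- have [m [m_s m_out]] := A _ (map_f (map toV) sF).
  exists (ofV m); split=> [u us|u uF us].
  + by rewrite -dot_toV ofVK; apply: m_s; apply: map_f.
  + by rewrite -dot_toV ofVK; apply: m_out; rewrite ?rays_toF mem_toV.
- move: sF => /mapP [s0 s0F ->]; have [m [m_s m_out]] := A s0 s0F.
  exists (toV m); split=> [w /mapP [u us ->]|w].
  + by rewrite dot_toV; apply: m_s.
  + by rewrite rays_toF => /mapP [u uF ->]; rewrite mem_toV dot_toV; apply: m_out.
Qed.

Lemma zample_eq F G : zfan_eq F G -> zample G -> zample F.
Proof.
move=> FG A s sF; have r := zfan_eq_rays FG; case: FG => FG' _.
have [t tG st] := FG' s sF; have [m [m_t m_out]] := A t tG.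
exists m; split=> [u|u uF]; first by rewrite st; apply: m_t.
by rewrite st; apply: m_out; rewrite -r.
Qed.

Lemma zample_cone F u : zample F -> u \in flatten F ->
  exists s, exists m, [/\ s \in F, u \in s, {in s, forall g, dot3 m g = -1} &
     {in flatten F, forall w, -1 <= dot3 m w /\ (dot3 m w = -1 -> w \in s)}].
Proof.
move=> A /flattenP [s sF us]; have [m [m_s m_out]] := A s sF.
exists s, m; split=> // w wF; have [ws|ws] := boolP (w \in s); first by rewrite m_s.
have := m_out w wF ws => lt; split; first exact: ltW.
by move=> e; move: lt; rewrite e ltxx.
Qed.

Lemma basis_avoiding_not_ample F s : admissible F -> s \in F ->
  ~~ has (fun e => e \in s) basis3 -> ~ zample F.
Proof.
move=> [cones pos basis] sF ns A.
have [a [b [c [sE _]]]] := cones s sF; have [m [m_s m_out]] := A s sF.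
have aF : a \in flatten F by apply/flattenP; exists s; rewrite // sE inE eqxx.
have [a1 a2 a3 _] := pos a aF; have ma : dot3 m a = -1 by apply: m_s; rewrite sE inE eqxx.
have m_e e : e \in basis3 -> -1 < dot3 m e.
  by move=> eb; apply: m_out; [apply: basis | apply: contra ns => es; apply/hasP; exists e].
have [h1 h2 h3] : [/\ -1 < dot3 m (1, 0, 0), -1 < dot3 m (0, 1, 0) & -1 < dot3 m (0, 0, 1)].
  by split; apply: m_e; rewrite !inE eqxx ?orbT.
move: ma a1 a2 a3 h1 h2 h3; case: m a {m_s m_out m_e sE aF} => [[m1 m2] m3] [[x1 x2] x3].
rewrite /dot3 /= => ma a1 a2 a3 h1 h2 h3.
have : 0 <= m1 * x1 + m2 * x2 + m3 * x3 by rewrite !addr_ge0 ?mulr_ge0 //; lia.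
by rewrite ma.
Qed.

Lemma midpoint_not_ample F u x y : admissible F ->
  u \in flatten F -> x \in flatten F -> y \in flatten F -> x != y -> x + y = scale3 2 u ->
  ~ zample F.
Proof.
move=> [cones _ _] uF xF yF xy e A.
have [s [m [sF us m_s m_ge]]] := zample_cone A uF.
have := congr1 (dot3 m) e; rewrite dot3D dot3Z (m_s u us).
case: (m_ge x xF) (m_ge y yF) => [hx xs] [hy ys] sum.
have xs' : x \in s by apply: xs; lia.
have ys' : y \in s by apply: ys; lia.
have [a [b [c [sE d]]]] := cones s sF; rewrite sE in us xs' ys'.
have u2 : scale3 2 u = u + u by apply: Z3_eq; rewrite /= mulr2n mulrDl mul1r.
have xu : x != u by apply: contra_neq xy => xu; apply: (addrI x); rewrite e xu u2.
have yu : y != u by apply: contra_neq xy => yu; apply: (addIr y); rewrite e yu u2.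
by move/eqP: d; apply; apply: (det3_midpoint_cone xs' ys' us _ e); rewrite /= !inE negb_or xy xu yu.
Qed.

Lemma third_not_ample F u x y :
  u \in flatten F -> x \in flatten F -> y \in flatten F -> x + y = scale3 3 u -> ~ zample F.
Proof.
move=> uF xF yF e A; have [s [m [sF us m_s m_ge]]] := zample_cone A uF.
have := congr1 (dot3 m) e; rewrite dot3D dot3Z (m_s u us).
by case: (m_ge x xF) (m_ge y yF) => [hx _] [hy _]; lia.
Qed.

Lemma obstructed_not_ample F : admissible F -> obstructed F -> ~ zample F.
Proof.
move=> adm [[s sF ns]|[u [x [y [uF xF yF xy e]]]]|[u [x [y [uF xF yF e]]]]].
- exact: basis_avoiding_not_ample adm sF ns.
- exact: midpoint_not_ample adm uF xF yF xy e.
- exact: third_not_ample uF xF yF e.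
Qed.

(** * Deciding ampleness on unimodular fans *)

(* By Cramer's rule, the linear form equal to [-1] on a cone of determinant [d = +-1]. *)
Definition support3 (s : seq Z3) : Z3 :=
  if s is [:: a; b; c] then scale3 (- det3 a b c) (cross3 b c + cross3 c a + cross3 a b)
  else 0.

Definition unimodular (F : zfan) : bool :=
  all (fun s => if s is [:: a; b; c] then det3 a b c ^+ 2 == 1 else false) F.

Definition ample3 (F : zfan) : bool :=
  all (fun s => all (fun w => (w \in s) || (-1 < dot3 (support3 s) w)) (flatten F)) F.

Lemma support3_cone a b c : det3 a b c ^+ 2 = 1 ->
  {in [:: a; b; c], forall g, dot3 (support3 [:: a; b; c]) g = -1}.
Proof.
move=> d2 g; rewrite !inE -d2 => /or3P [] /eqP ->;
case: a b c {d2} => [[? ?] ?] [[? ?] ?] [[? ?] ?];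
by rewrite /support3 /scale3 /det3 /dot3 /cross3 /=; ring.
Qed.

Lemma support3_unique a b c m : det3 a b c ^+ 2 = 1 ->
  {in [:: a; b; c], forall g, dot3 m g = -1} -> m = support3 [:: a; b; c].
Proof.
move=> d2 m_s.
have cramer : scale3 (det3 a b c) m = scale3 (dot3 m a) (cross3 b c)
                + scale3 (dot3 m b) (cross3 c a) + scale3 (dot3 m c) (cross3 a b).
  case: a b c m {m_s d2} => [[? ?] ?] [[? ?] ?] [[? ?] ?] [[? ?] ?].
  rewrite /scale3 /det3 /dot3 /cross3 /=; by apply: Z3_eq; rewrite /=; ring.
rewrite !m_s ?inE ?eqxx ?orbT // in cramer.
have -> : m = scale3 (det3 a b c) (scale3 (det3 a b c) m).
  by case: m {cramer m_s} => [[? ?] ?]; rewrite /scale3 /= !mulrA -expr2 d2 !mul1r.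
rewrite cramer /support3; move: (det3 a b c) => d.
by case: (cross3 b c) (cross3 c a) (cross3 a b) => [[? ?] ?] [[? ?] ?] [[? ?] ?];
  rewrite /scale3 /=; apply: Z3_eq; rewrite /=; ring.
Qed.

Lemma ample3P F : unimodular F -> reflect (zample F) (ample3 F).
Proof.
move=> /allP uF; apply: (iffP allP) => [A s sF | A s sF].
- have := uF s sF; case: s sF => [|a [|b [|c [|]]]] // sF /eqP d2.
  exists (support3 [:: a; b; c]); split; first exact: support3_cone.
  by move=> w wF ws; have := allP (A _ sF) w wF; rewrite (negbTE ws).
- have [m [m_s m_out]] := A s sF; apply/allP => w wF.
  have := uF s sF; case: s sF m_s m_out => [|a [|b [|c [|]]]] // sF m_s m_out /eqP d2.
  rewrite -(support3_unique d2 m_s); case: (boolP (w \in _)) => //= ws.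
  exact: m_out.
Qed.

(** * The census of reachable fans *)

Definition nonzero_masks3 : seq bitseq :=
  [:: [:: true; false; false]; [:: false; true; false]; [:: false; false; true];
      [:: true; true; false]; [:: true; false; true]; [:: false; true; true];
      [:: true; true; true]].

Lemma nonzero_masks3P (m : bitseq) : size m = 3 -> has id m -> m \in nonzero_masks3.
Proof. by case: m => [|[] [|[] [|[] []]]]. Qed.

Definition children (F : zfan) : seq zfan :=
  [seq zstar F (mask m s) | s <- F, m <- nonzero_masks3].

Lemma child_of_face F N T : unimodular N -> zfan_eq F N -> zface F T ->
  exists2 G, G \in children N & zfan_eq (zstar F T) G.
Proof.
move=> /allP uN FN [T0 uT [s sF sT]]; have [FN' _] := FN.
have [s1 s1N ss1] := FN' s sF; have := uN s1 s1N.
case: s1 s1N ss1 => [|a [|b [|c [|]]]] // s1N ss1 /eqP d2.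
have us1 : uniq [:: a; b; c] by apply: det3_uniq; rewrite -sqrf_eq0 d2 oner_eq0.
exists (zstar N (mask [seq x \in T | x <- [:: a; b; c]] [:: a; b; c])).
  apply: allpairs_f s1N _; apply: nonzero_masks3P; first by rewrite size_map.
  case: T T0 sT uT => [//|t T'] _ sT _; apply/hasP; exists (t \in t :: T'); last exact: mem_head.
  by apply: map_f; rewrite -ss1; apply: sT; apply: mem_head.
apply: zfan_eq_trans (zstar_eq T FN) _; rewrite -filter_mask.
apply: zstar_perm; rewrite ?filter_uniq // => x; rewrite mem_filter andb_idr // => xT.
by rewrite -ss1; apply: sT.
Qed.

Definition scale_sub3 (k : int) (u x : Z3) : Z3 :=
  (k * u.1.1 - x.1.1, k * u.1.2 - x.1.2, k * u.2 - x.2).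

Definition obstructedb (F : zfan) : bool :=
  let R := undup (flatten F) in
  [|| has (fun s => ~~ has (fun e => e \in s) basis3) F,
      has (fun u => has (fun x => (x != scale_sub3 2 u x) && (scale_sub3 2 u x \in R)) R) R
    | has (fun u => has (fun x => scale_sub3 3 u x \in R) R) R].

Lemma obstructedbP F : obstructedb F -> obstructed F.
Proof.
have sumK k (u x : Z3) : x + scale_sub3 k u x = scale3 k u.
  by apply: Z3_eq; rewrite /= addrC subrK.
case/or3P => [/hasP [s sF ns]|/hasP [u uF /hasP [x xF /andP [xy yF]]]|/hasP [u uF /hasP [x xF yF]]].
- by apply: Or31; exists s.
- by apply: Or32; exists u, x, (scale_sub3 2 u x); rewrite -!(mem_undup (flatten F)).
- by apply: Or33; exists u, x, (scale_sub3 3 u x); rewrite -!(mem_undup (flatten F)).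
Qed.

Definition lex3 (a b : Z3) : bool :=
  (a.1.1 < b.1.1) || (a.1.1 == b.1.1) && ((a.1.2 < b.1.2) || (a.1.2 == b.1.2) && (a.2 <= b.2)).

Fixpoint lexseq (s t : seq Z3) : bool :=
  match s, t with
  | a :: s', b :: t' => (a != b) && lex3 a b || (a == b) && lexseq s' t'
  | [::], _ => true
  | _, [::] => false
  end.

Definition canon (F : zfan) : zfan := sort lexseq (map (sort lex3) F).

Lemma canon_eq F : zfan_eq F (canon F).
Proof.
split=> s.
- move=> sF; exists (sort lex3 s); first by rewrite mem_sort; apply: map_f.
  by move=> x; rewrite mem_sort.
- by rewrite mem_sort => /mapP [t tF ->]; exists t => // x; rewrite mem_sort.
Qed.

Definition known (L : seq zfan) (G : zfan) : bool := (canon G \in L) || obstructedb G.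

(* Breadth-first search; only the closedness of its result, checked below, matters. *)
Fixpoint explore (fuel : nat) (seen todo : seq zfan) : seq zfan :=
  if fuel is n.+1 then
    if todo is F :: todo' then
      let step acc G := if known (seen ++ acc) G then acc else rcons acc (canon G) in
      let new := foldl step [::] (children F) in
      explore n (seen ++ new) (todo' ++ new)
    else seen
  else seen.

Definition census : seq zfan := Eval vm_compute in explore 1000 [:: canon zA3] [:: canon zA3].

Lemma census_closed : all (fun N => all (known census) (children N)) census.
Proof. by vm_compute. Qed.

Lemma census_unimodular : all unimodular census.
Proof. by vm_compute. Qed.

Lemma reachable_census F : reachable F ->
  admissible (ofF F) /\ ((exists2 N, N \in census & zfan_eq (ofF F) N) \/ obstructed (ofF F)).
Proof.
elim=> [|{}F T _ [adm IH] fT].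
  have -> : ofF A3 = zA3 by rewrite -(toFK zA3).
  split; first exact: admissible_zA3.
  by left; exists (canon zA3); [vm_compute | apply: canon_eq].
rewrite ofF_star; have fT3 := ofF_face fT; split; first exact: admissible_zstar.
case: IH => [[N NC FN]|O]; last by right; apply: obstructed_zstar.
have [G GN FG] := child_of_face (allP census_unimodular N NC) FN fT3.
case/orP: (allP (allP census_closed N NC) G GN) => [GC|/obstructedbP O].
- by left; exists (canon G) => //; apply: zfan_eq_trans FG (canon_eq G).
- by right; apply: obstructed_eq FG O.
Qed.

Definition swap13 (p : Z3) : Z3 := (p.2, p.1.2, p.1.1).
Definition swap23 (p : Z3) : Z3 := (p.1.1, p.2, p.1.2).

Lemma toV_swap13 p : toV (swap13 p) = toV p *m perm_mx (tperm i0 i2).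
Proof.
rewrite -tpermV -col_permE; apply/rowP => j; rewrite !mxE permE.
by case: j => -[|[|[|//]]] ?.
Qed.

Lemma toV_swap23 p : toV (swap23 p) = toV p *m perm_mx (tperm i1 i2).
Proof.
rewrite -tpermV -col_permE; apply/rowP => j; rewrite !mxE permE.
by case: j => -[|[|[|//]]] ?.
Qed.

Lemma zfan_eq_map (f : Z3 -> Z3) F G : zfan_eq F G -> zfan_eq (map (map f) F) (map (map f) G).
Proof.
have map_refines F' G' : refines F' G' -> refines (map (map f) F') (map (map f) G').
  move=> FG _ /mapP [s sF ->]; have [t tG st] := FG s sF.
  exists (map f t); first exact: map_f.
  by move=> x; apply/mapP/mapP => -[y yi ->]; exists y; rewrite // ?st // -st.
by case=> FG GF; split; apply: map_refines.
Qed.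

Lemma fan_iso_map (f : Z3 -> Z3) (A : 'M[int]_3) F G : A \in unitmx ->
  (forall p, toV (f p) = toV p *m A) -> zfan_eq (map (map f) F) G -> fan_iso (toF F) (toF G).
Proof.
move=> uA fA FG; exists A => //.
have -> : map (map (fun u : vec => u *m A)) (toF F) = toF (map (map f) F).
  rewrite /toF -!map_comp; apply: eq_map => s /=.
  by rewrite -!map_comp; apply: eq_map => p /=; rewrite fA.
exact: fan_eq_toF.
Qed.

Lemma zfan_eq_iso F G : zfan_eq F G -> fan_iso (toF F) (toF G).
Proof.
move=> FG; apply: (@fan_iso_map id 1%:M); first exact: unitmx1.
  by move=> p; rewrite mulmx1.
by rewrite (eq_map (@map_id _)) map_id.
Qed.

Definition zfan2 : zfan := zstar zA3 [:: (1, 0, 0); (0, 1, 0)].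
Definition zfan3 : zfan := zstar zA3 basis3.
Definition zfan4 : zfan :=
  [:: [:: (1, 0, 0); (1, 1, 0); (1, 1, 1)];
      [:: (1, 0, 0); (0, 0, 1); (1, 1, 1)];
      [:: (0, 1, 0); (0, 0, 1); (1, 1, 1)];
      [:: (0, 1, 0); (1, 1, 0); (1, 1, 1)]].
Definition zfan5 : zfan :=
  [:: [:: (1, 0, 0); (0, 0, 1); (1, 1, 2)];
      [:: (1, 0, 0); (1, 1, 1); (1, 1, 2)];
      [:: (1, 0, 0); (0, 1, 0); (1, 1, 1)];
      [:: (0, 1, 0); (1, 1, 1); (1, 1, 2)];
      [:: (0, 1, 0); (0, 0, 1); (1, 1, 2)]].
Definition zfive : seq zfan := [:: zA3; zfan2; zfan3; zfan4; zfan5].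

Lemma toF_zfive : map toF zfive = [:: fan1; fan2; fan3; fan4; fan5].
Proof. by rewrite /zfive !map_cons /zfan2 /zfan3 -!star_toF. Qed.

(* The identity and two transpositions of coordinates suffice for the eleven ample
   fans of the census. *)
Definition iso_five (F : zfan) : bool :=
  [|| canon F \in map canon zfive, canon (map (map swap13) F) \in map canon zfive
    | canon (map (map swap23) F) \in map canon zfive].

Lemma iso_five_sound F N : zfan_eq F N -> iso_five N ->
  exists2 G, G \in [:: fan1; fan2; fan3; fan4; fan5] & fan_iso (toF F) G.
Proof.
have via f A : A \in unitmx -> (forall p, toV (f p) = toV p *m A) ->
    canon (map (map f) N) \in map canon zfive -> zfan_eq F N ->
    exists2 G, G \in [:: fan1; fan2; fan3; fan4; fan5] & fan_iso (toF F) G.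
  move=> uA fA /mapP [Z Z5 NZ] FN; exists (toF Z); first by rewrite -toF_zfive map_f.
  apply: (fan_iso_map uA fA); apply: zfan_eq_trans (zfan_eq_map f FN) _.
  apply: zfan_eq_trans (canon_eq _) _; rewrite NZ.
  exact: zfan_eq_sym (canon_eq Z).
move=> FN /or3P [h|h|h].
- by apply: (@via id 1%:M); rewrite ?unitmx1 ?(eq_map (@map_id _)) ?map_id // => p; rewrite mulmx1.
- exact: (via swap13 _ (unitmx_perm _ _) toV_swap13 h FN).
- exact: (via swap23 _ (unitmx_perm _ _) toV_swap23 h FN).
Qed.

Lemma census_classified : all (fun N => ~~ ample3 N || iso_five N) census.
Proof. by vm_compute. Qed.

Lemma classification F : reachable F -> anticanonical_ample F ->
  exists2 G, G \in [:: fan1; fan2; fan3; fan4; fan5] & fan_iso F G.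
Proof.
move=> rF; rewrite -(ofFK F) ample_toF => A.
have [adm [[N NC FN]|O]] := reachable_census rF; last by case: (obstructed_not_ample adm O A).
have /orP [na|] := allP census_classified N NC; last exact: iso_five_sound.
case/negP: na; apply/ample3P; first exact: (allP census_unimodular N NC).
exact: zample_eq (zfan_eq_sym FN) A.
Qed.

Definition zfaceb (F : zfan) (T : seq Z3) : bool :=
  [&& T != [::], uniq T & has (fun s => all (fun t => t \in s) T) F].

Lemma reachable_zstar F T : reachable (toF F) -> zfaceb F T -> reachable (toF (zstar F T)).
Proof.
move=> rF /and3P [T0 uT /hasP [s sF /allP sT]]; rewrite -star_toF; apply: reach_star rF _.
split; first by case: T T0 {uT sT}.
  by rewrite (map_inj_uniq toV_inj).
exists (map toV s); first exact: map_f.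
by move=> _ /mapP [t tT ->]; rewrite mem_toV; apply: sT.
Qed.

Definition realisations : seq zfan :=
  [:: zA3; zfan2; zfan3; zstar zfan2 [:: (1, 1, 0); (0, 0, 1)];
      zstar zfan3 [:: (1, 1, 1); (0, 0, 1)]].

Lemma realisations_reachable R : R \in realisations -> reachable (toF R).
Proof.
have r1 : reachable (toF zA3) := reach_A3.
have r2 : reachable (toF zfan2) by apply: reachable_zstar r1 _; vm_compute.
have r3 : reachable (toF zfan3) by apply: reachable_zstar r1 _; vm_compute.
rewrite !inE => /orP [/eqP->|/orP [/eqP->|/orP [/eqP->|/orP [/eqP->|/eqP->]]]] //.
- by apply: reachable_zstar r2 _; vm_compute.
- by apply: reachable_zstar r3 _; vm_compute.
Qed.

Lemma realisations_ample : all (fun R => unimodular R && ample3 R) realisations.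
Proof. by vm_compute. Qed.

Lemma realisations_canon : map canon realisations = map canon zfive.
Proof. by vm_compute. Qed.

Lemma realisation G : G \in [:: fan1; fan2; fan3; fan4; fan5] ->
  exists2 F : fan, reachable F /\ anticanonical_ample F & fan_iso F G.
Proof.
rewrite -toF_zfive => /mapP [Z Z5 ->].
have /mapP [R RR nZR] : canon Z \in map canon realisations by rewrite realisations_canon map_f.
have /andP [uR aR] := allP realisations_ample R RR.
exists (toF R); first by split; [exact: realisations_reachable | apply/ample_toF/ample3P].
apply: zfan_eq_iso; apply: zfan_eq_trans (canon_eq R) _; rewrite -nZR.
exact: zfan_eq_sym (canon_eq Z).
Qed.

Theorem proposition4p1 :
  (forall F : fan, reachable F -> anticanonical_ample F ->
     fan_iso F fan1 \/ fan_iso F fan2 \/ fan_iso F fan3 \/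
     fan_iso F fan4 \/ fan_iso F fan5) /\
  (forall G : fan, G \in [:: fan1; fan2; fan3; fan4; fan5] ->
     exists2 F : fan, reachable F /\ anticanonical_ample F & fan_iso F G).
Proof.
split; last exact: realisation.
move=> F rF A; have [G] := classification rF A.
by rewrite !inE => /orP [/eqP->|/orP [/eqP->|/orP [/eqP->|/orP [/eqP->|/eqP->]]]]; tauto.
Qed.
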